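(* Let $G=HN\le\mathrm{Sym}(\Omega)$ be a finite non-Frobenius $2$-transitive affine permutation group, where $N$ is the regular normal elementary abelian subgroup of order $p^k$ ($p$ prime) and $H$ is a point stabiliser, and suppose $\kappa(G)=2$. Write $N\setminus\{1\}=x^G$ and the set of derangements as $x^G\cup y^G$ with $y\in G\setminus N$. Then $|\mathrm C_H(x)|=p^br^c$ for some prime $r\ne p$ and integers $b,c\ge0$.
   Context: A derangement is an element fixing no point; $\kappa(G)$ is the number of conjugacy classes of derangements. A Frobenius group is a transitive non-regular group in which only the identity fixes more than one point. *)

From mathcomp Require Import all_boot all_fingroup all_solvable.
Set Implicit Arguments. Unset Strict Implicit. Unset Printing Implicit Defensive.

Definition derangement (T : finType) (g : {perm T}) : bool :=
  [forall a : T, g a != a].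

Definition derangements (T : finType) (G : {set {perm T}}) : {set {perm T}} :=
  [set g in G | derangement g].

Definition kappa (T : finType) (G : {set {perm T}}) : nat :=
  #|[set C in classes G | C \subset derangements G]|.

Definition frobenius_perm (T : finType) (G : {set {perm T}}) : Prop :=
  [/\ [transitive G, on [set: T] | 'P],
      (exists2 g, g \in G & (g != 1%g) && ~~ derangement g) &
      (forall g, g \in G -> 1 < #|[set a : T | g a == a]| -> g = 1%g)].

From mathcomp Require Import all_boot all_order all_fingroup all_solvable.
From mathcomp Require Import abelian.

(* If h in C_H(x) has prime order q <> p, then h * x has order q * p, lies
   outside N because the semiregular group N meets H trivially, and is a
   derangement: a point fixed by h * x would be fixed by (h * x)^q = x^q,
   a nontrivial element of N.  So h * x lies in the only derangement class
   outside N, that of y, whence q = #[y] / p.  All primes other than p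
   dividing |C_H(x)| therefore coincide. *)

Set Implicit Arguments. Unset Strict Implicit. Unset Printing Implicit Defensive.

Lemma factor_unique_p'_prime (p n : nat) : 0 < n ->
    (forall q1 q2, prime q1 -> prime q2 -> q1 != p -> q2 != p ->
       q1 %| n -> q2 %| n -> q1 = q2) ->
  exists r b c, [/\ prime r, r != p & n = p ^ b * r ^ c].
Proof.
move=> n_gt0 uniq_p'; have p'n_gt0 : 0 < n`_p^' := part_gt0 _ _.
have p'_dvd q : prime q -> q %| n`_p^' -> q != p /\ q %| n.
  move=> q_pr q_dvd; split; last exact: dvdn_trans q_dvd (dvdn_part _ _).
  by have /pnatP/(_ q q_pr q_dvd) := part_pnat p^' n; rewrite inE /=; apply.
have [p'n_gt1 | p'n_le1] := ltnP 1 n`_p^'.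
  have r_pr := pdiv_prime p'n_gt1; have [rp rn] := p'_dvd _ r_pr (pdiv_dvd _).
  have /p_natP[c def_p'n] : (pdiv n`_p^').-nat n`_p^'.
    apply/pnatP=> // q q_pr q_dvd; have [qp qn] := p'_dvd q q_pr q_dvd.
    by rewrite inE (uniq_p' q _ q_pr r_pr qp rp qn rn).
  by exists (pdiv n`_p^'), (logn p n), c; rewrite -p_part -def_p'n partnC.
have p'n1 : n`_p^' = 1 by apply/eqP; rewrite eqn_leq p'n_le1.
exists (if p == 2 then 3 else 2), (logn p n), 0.
split; first by case: ifP.
  by case: ifP => [/eqP -> // | /negbT]; rewrite eq_sym.
by rewrite expn0 muln1 -p_part -{1}(partnC p n_gt0) p'n1 muln1.
Qed.

Local Open Scope group_scope.

Section SemiregularSubgroup.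

Variables (T : finType) (N : {group {perm T}}).
Hypothesis semiregN : forall a : T, 'C_N[a | 'P] = 1.

Lemma semiregular_fix_eq1 (g : {perm T}) (a : T) : g \in N -> g a = a -> g = 1.
Proof.
move=> gN ga; suff : g \in 'C_N[a | 'P] by rewrite semiregN => /set1gP.
by rewrite inE gN; apply/astab1P; rewrite /= apermE ga.
Qed.

Lemma semiregular_mul_derangement (h x : {perm T}) :
  x \in N -> x != 1 -> commute h x -> coprime #[h] #[x] -> derangement (h * x).
Proof.
move=> xN ntx chx co_hx; apply/forallP=> a; apply/eqP=> hx_a.
have hxX : (h * x) ^+ #[h] = x ^+ #[h] by rewrite expgMn // expg_order mul1g.
have /eqP : x ^+ #[h] = 1.
  by apply: (semiregular_fix_eq1 (a := a) (groupX _ xN)); rewrite -hxX permX_fix.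
rewrite -order_dvdn => /coprime_dvdl/(_ co_hx).
by rewrite /coprime gcdnn order_eq1 (negPf ntx).
Qed.

Lemma semiregular_stab_mul_notin (h x : {perm T}) (a : T) :
  h a = a -> h != 1 -> x \in N -> h * x \notin N.
Proof.
move=> ha nth xN; apply: contra nth => hxN.
by apply/eqP/(semiregular_fix_eq1 _ ha); rewrite -(mulgK x h) groupM ?groupV.
Qed.

End SemiregularSubgroup.

Lemma order_second_derangement_class (T : finType) (G N : {group {perm T}})
    (p q : nat) (x y h : {perm T}) (a0 : T) :
  prime p -> p.-abelem N -> N \subset G -> (forall a : T, 'C_N[a | 'P] = 1) ->
  N^# = x ^: G -> derangements G = x ^: G :|: y ^: G ->
  h \in 'C_G[a0 | 'P] -> commute h x -> prime q -> q != p -> #[h] = q ->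
  #[y] = (q * p)%N.
Proof.
move=> p_pr abelN sNG semiregN defNs defD /setIP[hG /astab1P ha0] chx q_pr qp oh.
have /setD1P[ntx xN] : x \in N^# by rewrite defNs class_refl.
have ox : #[x] = p := abelem_order_p abelN xN ntx.
have co_hx : coprime #[h] #[x] by rewrite oh ox prime_coprime // dvdn_prime2.
have nth : h != 1 by rewrite -order_eq1 oh eqn_leq leqNgt prime_gt1.
have hx_der : derangement (h * x) :=
  semiregular_mul_derangement semiregN xN ntx chx co_hx.
have hxD : h * x \in derangements G by rewrite inE hx_der groupM ?(subsetP sNG x).
have hx_notN := semiregular_stab_mul_notin semiregN ha0 nth xN.
move: hxD; rewrite defD -defNs => /setUP[/setD1P[_ hxN] | /imsetP[z _ hx_yz]].
  by rewrite hxN in hx_notN.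
by rewrite -(orderJ y z) -hx_yz orderM // oh ox.
Qed.

Theorem lemma4p4 (T : finType) (G N H : {group {perm T}}) (p k : nat)
    (x y : {perm T}) (a0 : T) :
  [transitive^2 G, on [set: T] | 'P] ->
  ~ frobenius_perm G ->
  prime p -> p.-abelem N -> #|N| = (p ^ k)%N ->
  N <| G -> [transitive N, on [set: T] | 'P] ->
  (forall a : T, 'C_N[a | 'P] = 1) ->
  H = 'C_G[a0 | 'P] :> {set {perm T}} ->
  G = (H * N)%g :> {set {perm T}} ->
  kappa G = 2 ->
  x \in N -> N^#%g = x ^: G ->
  y \in G :\: N -> derangements G = x ^: G :|: y ^: G ->
  exists r b c : nat, [/\ prime r, r != p & #|'C_H[x]| = (p ^ b * r ^ c)%N].
Proof.
move=> _ _ p_pr abelN _ /normal_sub sNG _ semiregN defH _ _ _ defNs _ defD.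
have oy q : prime q -> q != p -> q %| #|'C_H[x]| -> #[y] = (q * p)%N.
  move=> q_pr qp /(Cauchy q_pr)[h /setIP[hH /cent1P chx] oh].
  have hC : h \in 'C_G[a0 | 'P] by rewrite -defH.
  exact: order_second_derangement_class p_pr abelN sNG semiregN defNs defD hC
    chx q_pr qp oh.
apply: factor_unique_p'_prime => // q1 q2 q1_pr q2_pr q1p q2p q1n q2n.
apply/eqP; rewrite -(eqn_pmul2r (prime_gt0 p_pr)).
by rewrite -(oy _ q1_pr q1p q1n) -(oy _ q2_pr q2p q2n).
Qed.
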